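(* Let $z_1,\dots,z_m\in\partial\mathbb{D}$ be distinct, $\mu=\sum_{j=1}^m\mu_j\delta_{z_j}$ with $\mu_j>0$, $\sum\mu_j=1$, and $G$ real-valued on $\{z_1,\dots,z_m\}$, numbered so that $G(z_1)\ge\cdots\ge G(z_m)$. Let $K_1,\dots,K_L$ be the $K$-groups $K_i=\{k_{i-1}+1,\dots,k_i\}$ ($k_0=0$, $k_L=m$), i.e. maximal blocks of consecutive indices on which $G(z_\cdot)$ is constant. Let $\mu_t=e^{tG}\mu/\int e^{tG}d\mu$, and let $\mu^{(K_i)}=\sum_{\ell\in K_i}\mu^{(K_i)}_\ell\delta_{z_\ell}$ with \[ \mu^{(K_i)}_\ell=\frac{\bigl[\prod_{p=1}^{k_{i-1}}|z_\ell-z_p|^2\bigr]\mu_\ell}{\sum_{r\in K_i}\bigl[\prod_{p=1}^{k_{i-1}}|z_r-z_p|^2\bigr]\mu_r}. \] Then for every $i$ and $\ell\in K_i$, coefficientwise (equivalently, uniformly on compact subsets of $\mathbb{C}$), \[ \lim_{t\to\infty}\Phi_\ell(z;\mu_t)=\prod_{p=1}^{k_{i-1}}(z-z_p)\;\Phi_{\ell-k_{i-1}}(z;\mu^{(K_i)}). \]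
   Context: $\Phi_n(z;\nu)$ denotes the monic orthogonal polynomial of degree $n$ for a positive measure $\nu$ on $\partial\mathbb{D}$ whose support has at least $n$ points; $\Phi_0=1$; empty products equal $1$. *)

From HB Require Import structures.
From mathcomp Require Import all_boot all_order all_algebra.
From mathcomp Require Import all_classical all_reals all_analysis.
From mathcomp Require Import complex.
Set Implicit Arguments. Unset Strict Implicit. Unset Printing Implicit Defensive.
Import Order.TTheory GRing.Theory Num.Theory ComplexField.
Local Open Scope ring_scope.

(* A positive finite atomic measure on the unit circle, given by points
   x 1, ..., x m and weights w 1, ..., w m (>= 0):  nu = sum_j w j delta_(x j). *)
Definition is_monic_OP (R : rcfType) (m : nat) (x : nat -> R[i]) (w : nat -> R)
    (n : nat) (P : {poly R[i]}) : Prop :=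
  [/\ P \is monic, size P = n.+1 &
      forall k : nat, (k < n)%N ->
        \sum_(1 <= j < m.+1) ((w j)%:C)%C * P.[x j] * ((x j) ^+ k)^* = 0].

(* Phi_n(z; nu): the monic orthogonal polynomial (chosen; unique whenever the
   support has at least n points); 0 if it does not exist (never used then). *)
Definition Phi (R : rcfType) (m : nat) (x : nat -> R[i]) (w : nat -> R)
    (n : nat) : {poly R[i]} :=
  match pselect (exists P, is_monic_OP m x w n P) with
  | left H => proj1_sig (cid H)
  | right _ => 0
  end.

Definition mu_t (R : realType) (m : nat) (z : nat -> R[i]) (mu : nat -> R)
    (G : R[i] -> R) (t : R) (j : nat) : R :=
  expR (t * G (z j)) * mu j / \sum_(1 <= r < m.+1) expR (t * G (z r)) * mu r.

(* weights of mu^(K_i), K_i = {a+1, ..., b} with a = k_{i-1}, b = k_i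
   (zero weight outside K_i) *)
Definition muK (R : rcfType) (z : nat -> R[i]) (mu : nat -> R) (a b : nat)
    (l : nat) : R :=
  if (a < l <= b)%N then
    (\prod_(1 <= p < a.+1) complex.Re (`|z l - z p| ^+ 2)) * mu l /
    \sum_(a.+1 <= r < b.+1) (\prod_(1 <= p < a.+1) complex.Re (`|z r - z p| ^+ 2)) * mu r
  else 0.

Definition cvg_pinfty (R : realType) (f : R -> R[i]) (l : R[i]) : Prop :=
  forall e : R, 0 < e -> exists T : R, forall t : R, T <= t -> `|f t - l| < (e%:C)%C.

From HB Require Import structures.
From mathcomp Require Import all_boot all_order all_algebra.
From mathcomp Require Import all_classical all_reals all_analysis.
From mathcomp Require Import complex.
From mathcomp Require Import ring lra zify.
Import Order.TTheory GRing.Theory Num.Theory ComplexField.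
Set Implicit Arguments. Unset Strict Implicit. Unset Printing Implicit Defensive.
Local Open Scope ring_scope.

(* Let g be the value of G on the K-group K_i = {a+1, ..., b}.  Rescaling mu_t
   by e^(-t g) does not change its orthogonal polynomials, and the rescaled
   weights tend to +oo at z_1, ..., z_a, equal mu_j on K_i and tend to 0 beyond
   k_i.  Put pi = prod_(p <= a) (z - z_p) and Psi = pi * Phi_(l-a)(|pi|^2 mu on K_i).
   Psi vanishes where the weights blow up, so its norm stays bounded, hence by
   minimality so does the norm of Q_t = Phi_l(mu_t); this forces Q_t(z_p) -> 0
   for p <= a.  Writing Q_t = S_t pi + r_t, the remainder r_t tends to 0 and S_t
   is monic of degree l - a, so the minimality of Phi_(l-a) bounds the norm of
   Q_t on K_i from below by that of Psi, up to o(1).  By Pythagoras the norm of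
   Psi - Q_t then tends to 0, so Psi - Q_t -> 0 at z_1, ..., z_b; its degree is
   < l <= b, so its coefficients tend to 0. *)

Lemma conj_real_complex (R : rcfType) (r : R) : (r%:C%C)^* = r%:C%C.
Proof. exact: conjc_real. Qed.

Lemma real_complex_eq0 (R : rcfType) (r : R) : (r%:C%C == 0 :> R[i]) = (r == 0).
Proof. by apply/eqP/eqP => [[]|->]. Qed.

Lemma size_sub_monic (R : nzRingType) n (P Q : {poly R}) :
  P \is monic -> Q \is monic -> size P = n.+1 -> size Q = n.+1 ->
  (size (P - Q)%R <= n)%N.
Proof.
move=> mP mQ sP sQ; apply/leq_sizeP => j; rewrite leq_eqVlt coefB.
case/predU1P => [<-|nj]; last by rewrite !nth_default ?subrr ?sP ?sQ.
by have := eqP mQ; rewrite -(eqP mP) /lead_coef sP sQ /= => ->; rewrite subrr.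
Qed.

Lemma sum_nat_gt0 (R : numDomainType) (a b : nat) (F : nat -> R) : (a < b)%N ->
  (forall j, (a <= j < b)%N -> 0 < F j) -> 0 < \sum_(a <= j < b) F j.
Proof.
move=> ab F_gt0; rewrite big_ltn // ltr_pwDl ?F_gt0 ?leqnn // big_nat.
by apply: sumr_ge0 => j /andP[aj jb]; rewrite ltW // F_gt0 // jb ltnW.
Qed.

Section InnerProduct.
Variables (R : rcfType) (m : nat) (x : nat -> R[i]).
Implicit Types (w : nat -> R) (P Q : {poly R[i]}).

Definition ip w P Q : R[i] := \sum_(1 <= j < m.+1) (w j)%:C%C * P.[x j] * (Q.[x j])^*.

Lemma ipDl w P1 P2 Q : ip w (P1 + P2) Q = ip w P1 Q + ip w P2 Q.
Proof. by rewrite /ip -big_split /=; apply: eq_bigr => j _; rewrite hornerD; ring. Qed.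

Lemma ipZl w c P Q : ip w (c *: P) Q = c * ip w P Q.
Proof. by rewrite /ip mulr_sumr; apply: eq_bigr => j _; rewrite hornerZ; ring. Qed.

Lemma ip_conj w P Q : ip w Q P = (ip w P Q)^*.
Proof.
rewrite /ip rmorph_sum; apply: eq_bigr => j _.
by rewrite !rmorphM /= conjCK conj_real_complex; ring.
Qed.

Lemma ipDr w P Q1 Q2 : ip w P (Q1 + Q2) = ip w P Q1 + ip w P Q2.
Proof. by rewrite ip_conj ipDl rmorphD /= -!ip_conj. Qed.

Lemma ipZr w c P Q : ip w P (c *: Q) = c^* * ip w P Q.
Proof. by rewrite ip_conj ipZl rmorphM /= -ip_conj. Qed.

Lemma ip_suml w n (F : 'I_n -> {poly R[i]}) Q :
  ip w (\sum_(r < n) F r) Q = \sum_(r < n) ip w (F r) Q.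
Proof.
rewrite /ip; under eq_bigr do rewrite horner_sum mulr_sumr mulr_suml.
exact: exchange_big.
Qed.

Lemma ip_sumr w n (F : 'I_n -> {poly R[i]}) P :
  ip w P (\sum_(r < n) F r) = \sum_(r < n) ip w P (F r).
Proof. by rewrite ip_conj ip_suml rmorph_sum; apply: eq_bigr => r _; rewrite [RHS]ip_conj. Qed.

Lemma ip_weightD w1 w2 P Q :
  ip (fun j => w1 j + w2 j) P Q = ip w1 P Q + ip w2 P Q.
Proof. by rewrite /ip -big_split /=; apply: eq_bigr => j _; rewrite rmorphD; ring. Qed.

Lemma eq_ip w1 w2 P Q :
  (forall j, (1 <= j <= m)%N -> w1 j = w2 j) -> ip w1 P Q = ip w2 P Q.
Proof. by move=> w12; apply: eq_big_nat => j /andP[j1 jm]; rewrite w12 ?j1. Qed.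

Lemma ip0 w P Q :
  (forall j, (1 <= j <= m)%N -> w j = 0 \/ P.[x j] = 0) -> ip w P Q = 0.
Proof.
move=> w0; rewrite /ip big_nat; apply: big1 => j /w0[] ->.
  by rewrite !mul0r.
by rewrite mulr0 mul0r.
Qed.

Lemma ip_self w P : ip w P P = \sum_(1 <= j < m.+1) (w j)%:C%C * `|P.[x j]| ^+ 2.
Proof. by apply: eq_bigr => j _; rewrite normCK mulrA. Qed.

Section NonnegativeWeights.
Variable w : nat -> R.
Hypothesis w_ge0 : forall j, (1 <= j <= m)%N -> 0 <= w j.

Lemma ip_self_ge0 P : 0 <= ip w P P.
Proof.
rewrite ip_self big_nat; apply: sumr_ge0 => j jm.
by rewrite mulr_ge0 ?exprn_ge0 // ler0c w_ge0.
Qed.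

Lemma ip_self_ge_term P j : (1 <= j <= m)%N ->
  (w j)%:C%C * `|P.[x j]| ^+ 2 <= ip w P P.
Proof.
move=> jm; rewrite ip_self (bigD1_seq j) ?mem_index_iota ?iota_uniq //=.
rewrite lerDl big_seq_cond; apply: sumr_ge0 => i /andP[].
by rewrite mem_index_iota => im _; rewrite mulr_ge0 ?exprn_ge0 // ler0c w_ge0.
Qed.

Lemma ip_self_eq0 (s : seq nat) P :
  (forall j, j \in s -> (1 <= j <= m)%N /\ 0 < w j) -> uniq (map x s) ->
  (size P <= size s)%N -> ip w P P = 0 -> P = 0.
Proof.
move=> s_supp s_uniq sPs P0.
have P_root j : j \in s -> root P (x j).
  case/s_supp => jm wj; have := ip_self_ge_term P jm; rewrite P0 => le0.
  have : (w j)%:C%C * `|P.[x j]| ^+ 2 == 0.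
    by rewrite eq_le le0 mulr_ge0 ?exprn_ge0 // ler0c ltW.
  by rewrite mulf_eq0 real_complex_eq0 gt_eqF // expf_eq0 normr_eq0.
apply/eqP; apply: contraTT sPs => /max_poly_roots rootsP; rewrite -ltnNge.
by rewrite -(size_map x) rootsP //; apply/allP => _ /mapP[j js ->]; exact: P_root.
Qed.

End NonnegativeWeights.

Lemma is_monic_OP_ip w n P :
  is_monic_OP m x w n P <->
  [/\ P \is monic, size P = n.+1 & forall k, (k < n)%N -> ip w P 'X^k = 0].
Proof.
have E k : ip w P 'X^k = \sum_(1 <= j < m.+1) (w j)%:C%C * P.[x j] * (x j ^+ k)^*.
  by apply: eq_bigr => j _; rewrite hornerXn.
by split=> -[mP sP oP]; split=> // k kn; [rewrite E | rewrite -E]; exact: oP.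
Qed.

Lemma OP_orth w n P Q : is_monic_OP m x w n P -> (size Q <= n)%N -> ip w P Q = 0.
Proof.
case/is_monic_OP_ip => _ _ oP sQ; rewrite -[Q]coefK poly_def ip_sumr big1 // => k _.
by rewrite ipZr oP ?mulr0 // (leq_trans (ltn_ord k)).
Qed.

Lemma OP_pythagoras w n P S :
  is_monic_OP m x w n P -> S \is monic -> size S = n.+1 ->
  ip w S S = ip w P P + ip w (S - P) (S - P).
Proof.
move=> OP_P mS sS; have [mP sP _] := OP_P.
have oD : ip w P (S - P) = 0 by apply: OP_orth OP_P _; exact: size_sub_monic.
have oD' : ip w (S - P) P = 0 by rewrite ip_conj oD conjC0.
have eS : S = P + (S - P) by rewrite addrC subrK.
move: oD oD' eS; set D := S - P; clearbody D => oD oD' ->.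
by rewrite ipDl !ipDr oD oD' addr0 add0r.
Qed.

Lemma OP_scale w w' c n P : c != 0 -> (forall j, w' j = c * w j) ->
  is_monic_OP m x w' n P -> is_monic_OP m x w n P.
Proof.
move=> c0 w'E /is_monic_OP_ip[mP sP oP]; apply/is_monic_OP_ip; split=> // k kn.
have : ip w' P 'X^k = c%:C%C * ip w P 'X^k.
  by rewrite /ip mulr_sumr; apply: eq_bigr => j _; rewrite w'E rmorphM /=; ring.
by rewrite oP // => /esym/eqP; rewrite mulf_eq0 real_complex_eq0 (negbTE c0) => /eqP.
Qed.

Lemma rVpolyE n (v : 'rV[R[i]]_n) : rVpoly v = \sum_(r < n) v 0 r *: 'X^r.
Proof. by rewrite [rVpoly v]poly_def; apply: eq_bigr => r _; rewrite valK. Qed.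

Lemma OP_exists w n (s : seq nat) :
  (forall j, (1 <= j <= m)%N -> 0 <= w j) ->
  (forall j, j \in s -> (1 <= j <= m)%N /\ 0 < w j) -> uniq (map x s) ->
  (n <= size s)%N -> exists P, is_monic_OP m x w n P.
Proof.
move=> w_ge0 s_supp s_uniq ns.
pose A : 'M[R[i]]_n := \matrix_(r, k) ip w 'X^r 'X^k.
have mulA v k : (v *m A) 0 k = ip w (rVpoly v) 'X^k.
  by rewrite rVpolyE ip_suml mxE; apply: eq_bigr => r _; rewrite ipZl mxE.
have A_unit : A \in unitmx.
  rewrite unitmxE unitfE; apply/negP => /det0P[v v0 vA].
  have : ip w (rVpoly v) (rVpoly v) = 0.
    rewrite {2}rVpolyE ip_sumr big1 // => k _.
    by rewrite ipZr -mulA vA mxE mulr0.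
  move/(ip_self_eq0 w_ge0 s_supp s_uniq (leq_trans (size_poly _ _) ns)).
  by rewrite -(linear0 (@rVpoly _ n)) => /(can_inj rVpolyK) v_eq0; rewrite v_eq0 eqxx in v0.
pose b := \row_(k < n) - ip w 'X^n 'X^k.
exists ('X^n + rVpoly (b *m invmx A)).
have sXn : (size (rVpoly (b *m invmx A)) < size ('X^n : {poly R[i]}))%N.
  by rewrite size_polyXn ltnS size_poly.
apply/is_monic_OP_ip; split.
- by rewrite monicE lead_coefDl // lead_coefXn.
- by rewrite size_polyDl // size_polyXn.
- move=> k kn; rewrite ipDl -[k]/(val (Ordinal kn)) -mulA mulmxKV // mxE.
  exact: subrr.
Qed.

End InnerProduct.

Lemma Phi_OP (R : rcfType) m (x : nat -> R[i]) w n :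
  (exists P, is_monic_OP m x w n P) -> is_monic_OP m x w n (Phi m x w n).
Proof. by move=> OP_ex; rewrite /Phi; case: pselect => // H; exact: proj2_sig (cid H). Qed.

Section ComplexModulus.
Variable R : rcfType.
Implicit Types x y : R[i].

(* The modulus as an element of R, so that lra and nra can reason about it. *)
Definition nrm x : R := Normc.normc x.

Lemma normcE x : `|x| = (nrm x)%:C%C.
Proof. by []. Qed.

Lemma nrm_ge0 x : 0 <= nrm x.
Proof. by rewrite -ler0c -normcE. Qed.

Lemma nrmD x y : nrm (x + y) <= nrm x + nrm y.
Proof. by rewrite -lecR rmorphD -!normcE ler_normD. Qed.

Lemma nrmM x y : nrm (x * y) = nrm x * nrm y.
Proof. exact: Normc.normcM. Qed.

Lemma nrmN x : nrm (- x) = nrm x.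
Proof. by apply: complexI; rewrite -!normcE normrN. Qed.

Lemma nrm_conj x : nrm x^* = nrm x.
Proof. by apply: complexI; rewrite -!normcE norm_conjC. Qed.

Lemma nrm_real (r : R) : nrm r%:C%C = `|r|.
Proof. by apply: complexI; rewrite -normcE normc_def /= expr0n addr0 sqrtr_sqr. Qed.

Lemma nrm0 : nrm 0 = 0.
Proof. exact: Normc.normc0. Qed.

Lemma nrm1 : nrm 1 = 1.
Proof. exact: Normc.normc1. Qed.

Lemma nrm_gt0 x : x != 0 -> 0 < nrm x.
Proof. by move=> x0; rewrite -ltcR -normcE normr_gt0. Qed.

Lemma Re_sqr_norm x : complex.Re (`|x| ^+ 2) = nrm x ^+ 2.
Proof. by rewrite normcE -rmorphXn. Qed.

Lemma le_nrm (r : R) x : 0 <= r -> r%:C%C <= x -> r <= nrm x.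
Proof. by move=> r0 rx; rewrite -lecR -normcE ger0_norm // (le_trans _ rx) ?ler0c. Qed.

End ComplexModulus.

Lemma coef_Vandermonde (F : fieldType) n (a : 'rV[F]_n) (p : {poly F}) :
  injective (a 0) -> (size p <= n)%N ->
  \row_(c < n) p`_c = \row_(j < n) p.[a 0 j] *m invmx (Vandermonde n a).
Proof.
move=> a_inj sp; have V_unit : Vandermonde n a \in unitmx.
  rewrite unitmxE unitfE det_Vandermonde; apply/prodf_neq0 => i _.
  by apply/prodf_neq0 => j ij; rewrite subr_eq0 (inj_eq a_inj) -val_eqE /= gtn_eqF.
rewrite -[LHS](mulmxK V_unit); congr (_ *m _); apply/rowP => j.
by rewrite !mxE (horner_coef_wide _ sp); apply: eq_bigr => c _; rewrite !mxE.
Qed.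

Section Vanishing.
Variable R : realType.
Implicit Types f g h : R -> R[i].

Definition vanishing f := forall e : R, 0 < e -> \forall t \near +oo, nrm (f t) < e.

Lemma vanishing_le f g :
  vanishing f -> (\forall t \near +oo, nrm (g t) <= nrm (f t)) -> vanishing g.
Proof. by move=> vf fg e e0; apply: filterS2 fg (vf e e0) => t; exact: le_lt_trans. Qed.

Lemma vanishing_ext f g : vanishing f -> f =1 g -> vanishing g.
Proof. by move=> vf fg; apply: vanishing_le vf _; apply: filterE => t; rewrite fg. Qed.

Lemma vanishing_eq0 f : (forall t, f t = 0) -> vanishing f.
Proof. by move=> f0 e e0; apply: filterE => t; rewrite f0 nrm0. Qed.

Lemma vanishingD f g : vanishing f -> vanishing g -> vanishing (fun t => f t + g t).
Proof.
move=> vf vg e e0; have e2 : 0 < e / 2 by rewrite divr_gt0.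
apply: filterS2 (vf _ e2) (vg _ e2) => t ft gt; apply: le_lt_trans (nrmD _ _) _.
by rewrite [e](splitr e) ltrD.
Qed.

Lemma vanishingN f : vanishing f -> vanishing (fun t => - f t).
Proof. by move=> vf e /vf; apply: filterS => t; rewrite nrmN. Qed.

Lemma vanishing_conj f : vanishing f -> vanishing (fun t => (f t)^*).
Proof. by move=> vf e /vf; apply: filterS => t; rewrite nrm_conj. Qed.

Lemma vanishingMl f g (B : R) : (\forall t \near +oo, nrm (g t) <= B) ->
  vanishing f -> vanishing (fun t => g t * f t).
Proof.
move=> gB vf e e0; have B1 : 0 < `|B| + 1 by rewrite ltr_pwDr.
apply: filterS2 gB (vf _ (divr_gt0 e0 B1)) => t gtB ft; rewrite nrmM.
have gt1 : nrm (g t) <= `|B| + 1 by rewrite (le_trans gtB) // ler_wpDr // ler_norm.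
apply: le_lt_trans (ler_wpM2r (nrm_ge0 _) gt1) _.
by rewrite mulrC -ltr_pdivlMr.
Qed.

Lemma vanishingMc (c : R[i]) f : vanishing f -> vanishing (fun t => c * f t).
Proof. by apply: (vanishingMl (B := nrm c)); exact: filterE. Qed.

Lemma vanishing_sum (I : eqType) (s : seq I) (F : I -> R -> R[i]) :
  (forall i, i \in s -> vanishing (F i)) -> vanishing (fun t => \sum_(i <- s) F i t).
Proof.
elim: s => [_|i s IHs vF]; first by apply: vanishing_eq0 => t; rewrite big_nil.
have vs : vanishing (fun t => \sum_(j <- s) F j t).
  by apply: IHs => j js; apply: vF; rewrite in_cons js orbT.
by apply: (vanishing_ext (vanishingD (vF i (mem_head _ _)) vs)) => t; rewrite big_cons.
Qed.

Lemma vanishing_sqr f h (c : R) : 0 < c -> vanishing h ->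
  (\forall t \near +oo, c * nrm (f t) ^+ 2 <= nrm (h t)) -> vanishing f.
Proof.
move=> c0 vh fh e e0; have ce : 0 < c * e ^+ 2 by rewrite mulr_gt0 ?exprn_gt0.
apply: filterS2 fh (vh _ ce) => t cfh hce.
have : c * nrm (f t) ^+ 2 < c * e ^+ 2 by apply: le_lt_trans hce.
by rewrite ltr_pM2l // ltr_pXn2r // ?nnegrE ?nrm_ge0 ?ltW.
Qed.

Lemma vanishing_bounded f : vanishing f -> \forall t \near +oo, nrm (f t) <= 1.
Proof. by move=> /(_ 1 ltr01); apply: filterS => t /ltW. Qed.

Lemma vanishing_weighted (w : R -> R) f (B : R) :
  (forall M, \forall t \near +oo, M <= w t) ->
  (\forall t \near +oo, w t * nrm (f t) ^+ 2 <= B) -> vanishing f.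
Proof.
move=> w_big wfB e e0; have e2 : 0 < e ^+ 2 by rewrite exprn_gt0.
apply: filterS2 (w_big ((`|B| + 1) / e ^+ 2)) wfB => t.
rewrite ler_pdivrMr // => Bw wf; have B0 := ler_norm B; have B0' := normr_ge0 B.
rewrite -(ltr_pXn2r (n := 2)) ?nnegrE ?nrm_ge0 ?ltW //.
have n0 := exprn_ge0 2 (nrm_ge0 (f t)); set E := e ^+ 2 in e2 Bw *.
set W := w t in Bw wf *; set N := nrm (f t) ^+ 2 in n0 wf *; nra.
Qed.

Lemma vanishing_horner (P : R -> {poly R[i]}) n (y : R[i]) :
  (forall t, (size (P t) <= n)%N) -> (forall c, vanishing (fun t => (P t)`_c)) ->
  vanishing (fun t => (P t).[y]).
Proof.
move=> sP vP; have vPy c : vanishing (fun t => y ^+ c * (P t)`_c) by exact: vanishingMc.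
apply: (vanishing_ext (vanishing_sum (s := index_iota 0 n) (fun c _ => vPy c))) => t.
by rewrite big_mkord (horner_coef_wide _ (sP t)); apply: eq_bigr => c _; rewrite mulrC.
Qed.

Lemma vanishing_coef (P : R -> {poly R[i]}) n (a : 'rV[R[i]]_n) :
  injective (a 0) -> (forall t, (size (P t) <= n)%N) ->
  (forall j, vanishing (fun t => (P t).[a 0 j])) -> forall c, vanishing (fun t => (P t)`_c).
Proof.
move=> a_inj sP vP c; have [cn|nc] := ltnP c n; last first.
  by apply: vanishing_eq0 => t; rewrite nth_default // (leq_trans (sP t)).
pose V := invmx (Vandermonde n a).
have vPV j : vanishing (fun t => V j (Ordinal cn) * (P t).[a 0 j]) by exact: vanishingMc.
apply: (vanishing_ext (vanishing_sum (s := enum 'I_n) (fun j _ => vPV j))) => t.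
move/rowP/(_ (Ordinal cn)): (coef_Vandermonde a_inj (sP t)).
by rewrite !mxE /= big_enum => ->; apply: eq_bigr => j _; rewrite mxE mulrC.
Qed.

Lemma near_expR_ge (d M : R) : 0 < d -> \forall t \near +oo, M <= expR (t * d).
Proof.
move=> d0; apply: (filterS _ (nbhs_pinfty_ge (num_real (M / d)))) => t.
rewrite ler_pdivrMr // => Mtd; apply: le_trans (expR_ge1Dx _); lra.
Qed.

Lemma vanishing_expR (d c : R) : d < 0 -> vanishing (fun t => (expR (t * d) * c)%:C%C).
Proof.
move=> d0 e e0; have c1 : 0 < `|c| + 1 by rewrite ltr_pwDr.
have nd : 0 < - d by rewrite oppr_gt0.
apply: (filterS _ (near_expR_ge ((`|c| + 1) / e) nd)) => t.
rewrite ler_pdivrMr // mulrN expRN nrm_real normrM gtr0_norm ?expR_gt0 // => cE.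
have E0 := expR_gt0 (t * d).
have EV : expR (t * d) * (expR (t * d))^-1 = 1 by rewrite divff ?gt_eqF.
set E := expR _ in cE E0 EV *; set V := E^-1 in cE EV *; nra.
Qed.

Lemma vanishing_cvg_pinfty f L : vanishing (fun t => f t - L) -> cvg_pinfty f L.
Proof.
move=> vf e /vf[T [_ fT]]; exists (T + 1) => t Tt; rewrite normcE ltcR.
by apply: fT; apply: lt_le_trans Tt; rewrite ltrDl.
Qed.

End Vanishing.

Section InnerProductAsymptotics.
Variables (R : realType) (m : nat) (x : nat -> R[i]) (w : nat -> R).
Implicit Types P D : R -> {poly R[i]}.

Lemma vanishing_ip P D :
  (forall j, (1 <= j <= m)%N -> w j != 0 ->
     exists B, \forall t \near +oo, nrm (P t).[x j] <= B) ->
  (forall j, (1 <= j <= m)%N -> w j != 0 -> vanishing (fun t => (D t).[x j])) ->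
  vanishing (fun t => ip m x w (P t) (D t)).
Proof.
move=> P_bnd D_van; apply: vanishing_sum => j; rewrite mem_index_iota => jm.
have [->|w0] := eqVneq (w j) 0.
  by apply: vanishing_eq0 => t; rewrite !mul0r.
have [B PB] := P_bnd j jm w0.
apply: (vanishingMl (B := `|w j| * B)) (vanishing_conj (D_van j jm w0)).
by apply: filterS PB => t PtB; rewrite nrmM nrm_real ler_wpM2l.
Qed.

Lemma vanishing_ip_selfD P D :
  (forall j, (1 <= j <= m)%N -> w j != 0 ->
     exists B, \forall t \near +oo, nrm (P t).[x j] <= B) ->
  (forall j, (1 <= j <= m)%N -> w j != 0 -> vanishing (fun t => (D t).[x j])) ->
  vanishing (fun t => ip m x w (P t + D t) (P t + D t) - ip m x w (P t) (P t)).
Proof.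
move=> P_bnd D_van; have PD := vanishing_ip P_bnd D_van.
have D_bnd j : (1 <= j <= m)%N -> w j != 0 ->
    exists B, \forall t \near +oo, nrm (D t).[x j] <= B.
  by move=> jm w0; exists 1; exact/vanishing_bounded/D_van.
have DD := vanishing_ip D_bnd D_van.
apply: (vanishing_ext (vanishingD PD (vanishingD (vanishing_conj PD) DD))) => t.
by rewrite ipDl !ipDr -ip_conj; ring.
Qed.

End InnerProductAsymptotics.

Definition restr_weight (R : rcfType) (a b : nat) (w : nat -> R) (j : nat) : R :=
  if (a < j <= b)%N then w j else 0.

Section BlockLimit.
Variables (R : realType) (m a b l : nat) (z : nat -> R[i]) (mu : nat -> R).
Variables (v : R -> nat -> R) (Q : R -> {poly R[i]}) (Phn : {poly R[i]}).
Local Notation pi := (\prod_(1 <= p < a.+1) ('X - (z p)%:P)).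
Local Notation W := (restr_weight a b (fun j => nrm pi.[z j] ^+ 2 * mu j)).

Hypothesis z_inj : forall p q, (1 <= p <= m)%N -> (1 <= q <= m)%N -> z p = z q -> p = q.
Hypotheses (a_lt_l : (a < l)%N) (l_le_b : (l <= b)%N) (b_le_m : (b <= m)%N).
Hypothesis mu_gt0 : forall j, (a < j <= b)%N -> 0 < mu j.
Hypothesis v_ge0 : forall t j, (1 <= j <= m)%N -> 0 <= v t j.
Hypothesis v_left : forall p M, (1 <= p <= a)%N -> \forall t \near +oo, M <= v t p.
Hypothesis v_block : forall t j, (a < j <= b)%N -> v t j = mu j.
Hypothesis v_right : forall j, (b < j <= m)%N -> vanishing (fun t => (v t j)%:C%C).
Hypothesis Q_OP : forall t, is_monic_OP m z (v t) l (Q t).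
(* W is mu^(K_i) up to its normalising constant. *)
Hypothesis Phn_OP : is_monic_OP m z W (l - a) Phn.

Let u := restr_weight a b mu.
Let vR t j := if (b < j)%N then v t j else 0.
Let vL t j := if (j <= a)%N then v t j else 0.
Let Psi := pi * Phn.
Let Es := ip m z u Psi Psi.
Let eps t := ip m z (vR t) Psi Psi.

Lemma pi_root p : (1 <= p <= a)%N -> pi.[z p] = 0.
Proof.
move=> pa; rewrite horner_prod (bigD1_seq p) ?iota_uniq ?mem_index_iota //=.
by rewrite hornerXsubC subrr mul0r.
Qed.

Lemma Psi_monic : Psi \is monic.
Proof. by rewrite rpredM ?monic_prod_XsubC //; case: Phn_OP. Qed.

Lemma size_pi : size pi = a.+1.
Proof. by rewrite size_prod_XsubC size_iota subn1. Qed.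

Lemma size_Psi : size Psi = l.+1.
Proof.
have [mP sP _] := Phn_OP.
rewrite size_Mmonic ?monic_neq0 ?monic_prod_XsubC // size_pi sP.
by rewrite addSn /= addnS subnKC // ltnW.
Qed.

Lemma ip_pi P P' : ip m z u (pi * P) (pi * P') = ip m z W P P'.
Proof.
apply: eq_bigr => j _; rewrite /u /restr_weight; case: ifP => _; last by rewrite !mul0r.
by rewrite !hornerM rmorphM rmorphM rmorphXn /= -normcE normCK /=; ring.
Qed.

Lemma u_ge0 j : (1 <= j <= m)%N -> 0 <= u j.
Proof. by rewrite /u /restr_weight; case: ifP => // /mu_gt0 /ltW. Qed.

Lemma v_decomp t j : (1 <= j <= m)%N -> v t j = u j + (vL t j + vR t j).
Proof.
move=> _; rewrite /u /restr_weight /vL /vR.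
case: (leqP j a) => ja; case: (ltnP b j) => bj /=; rewrite ?add0r ?addr0 //.
- by exfalso; lia.
- by rewrite v_block ?ja.
Qed.

Lemma ip_v t P P' :
  ip m z (v t) P P' = ip m z u P P' + (ip m z (vL t) P P' + ip m z (vR t) P P').
Proof.
rewrite (@eq_ip _ _ _ (v t) (fun j => u j + (vL t j + vR t j))); last exact: v_decomp.
by rewrite !ip_weightD.
Qed.

Lemma ip_u_le_v t P : ip m z u P P <= ip m z (v t) P P.
Proof.
rewrite ip_v lerDl addr_ge0 // ip_self_ge0 // => j jm; rewrite /vL /vR.
  by case: ifP => // _; exact: v_ge0.
by case: ifP => // _; exact: v_ge0.
Qed.

Lemma ip_v_Psi t : ip m z (v t) Psi Psi = Es + eps t.
Proof.
rewrite ip_v (@ip0 _ _ _ (vL t)) ?add0r // => j /andP[j1 _]; rewrite /vL.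
by case: leqP => ja; [right; rewrite hornerM pi_root ?j1 ?mul0r | left].
Qed.

Lemma eps_vanishing : vanishing eps.
Proof.
apply: vanishing_sum => j; rewrite mem_index_iota /vR => jm; case: ltnP => bj.
  have vj : vanishing (fun t => (v t j)%:C%C) by apply: v_right; lia.
  by apply: (vanishing_ext (vanishingMc (Psi.[z j] * Psi.[z j]^*) vj)) => t; ring.
by apply: vanishing_eq0 => t; rewrite !mul0r.
Qed.

Lemma Q_Psi_pythagoras t :
  ip m z (v t) (Q t) (Q t) + ip m z (v t) (Psi - Q t) (Psi - Q t) = Es + eps t.
Proof. by rewrite -ip_v_Psi (OP_pythagoras (Q_OP t) Psi_monic size_Psi). Qed.

Let M := nrm Es + 1.

Lemma Q_weighted_bound j : (1 <= j <= m)%N ->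
  \forall t \near +oo, v t j * nrm (Q t).[z j] ^+ 2 <= M.
Proof.
move=> jm; apply: filterS (vanishing_bounded eps_vanishing) => t eps1.
apply: (@le_trans _ _ (nrm (Es + eps t))); last by rewrite (le_trans (nrmD _ _)) ?lerD2l.
apply: le_nrm; first by rewrite mulr_ge0 ?exprn_ge0 ?nrm_ge0 ?v_ge0.
rewrite rmorphM rmorphXn /= -normcE -Q_Psi_pythagoras.
apply: (le_trans (ip_self_ge_term z (v_ge0 t) (Q t) jm)).
by rewrite lerDl ip_self_ge0 // => i; exact: v_ge0.
Qed.

Lemma Q_vanishing_left p : (1 <= p <= a)%N -> vanishing (fun t => (Q t).[z p]).
Proof.
move=> pa; apply: (vanishing_weighted (w := v^~ p) (fun M => v_left M pa)).
by apply: Q_weighted_bound; lia.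
Qed.

Lemma Q_bounded_block j : (a < j <= b)%N ->
  exists B, \forall t \near +oo, nrm (Q t).[z j] <= B.
Proof.
move=> jb; exists (1 + M / mu j); have mu0 := mu_gt0 jb.
have jm : (1 <= j <= m)%N by lia.
apply: filterS (Q_weighted_bound jm) => t; rewrite v_block // => muQ.
have n0 := nrm_ge0 (Q t).[z j]; have : nrm (Q t).[z j] ^+ 2 <= M / mu j.
  by rewrite ler_pdivlMr // mulrC.
set n := nrm _ in n0 *; nra.
Qed.

Lemma row_nodes_inj n : (n <= m)%N -> injective ((\row_(p < n) z p.+1) 0).
Proof.
move=> nm p q; rewrite !mxE => /z_inj pq; apply/val_inj/succn_inj/pq;
  by rewrite /= (leq_trans (ltn_ord _) nm).
Qed.

Let r t := Q t %% pi.
Let S t := Q t %/ pi.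

Lemma size_r t : (size (r t) <= a)%N.
Proof. by rewrite -ltnS -size_pi ltn_modp monic_neq0 ?monic_prod_XsubC. Qed.

Lemma r_vanishing y : vanishing (fun t => (r t).[y]).
Proof.
apply: (vanishing_horner y size_r) => c.
have am : (a <= m)%N by rewrite (leq_trans (ltnW (leq_trans a_lt_l l_le_b))).
apply: (vanishing_coef (row_nodes_inj am) size_r).
move=> p; have pa : (1 <= p.+1 <= a)%N by rewrite /= ltn_ord.
apply: (vanishing_ext (Q_vanishing_left pa)) => t; rewrite mxE.
by rewrite [in LHS](divp_eq (Q t) pi) hornerD hornerM pi_root ?mulr0 ?add0r.
Qed.

Lemma S_monic_size t : S t \is monic /\ size (S t) = (l - a).+1.
Proof.
have [mQ sQ _] := Q_OP t; have pi_monic : pi \is monic by exact: monic_prod_XsubC.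
have QE : Q t = S t * pi + r t := divp_eq (Q t) pi.
have S0 : S t != 0.
  apply: contraTneq (size_r t) => S0; move: QE; rewrite S0 mul0r add0r => <-.
  by rewrite sQ -ltnNge ltnS ltnW.
have sSpi : size (S t * pi) = (size (S t) + a)%N by rewrite size_Mmonic // size_pi addnS.
have sr : (size (r t) < size (S t * pi)%R)%N.
  by rewrite sSpi (leq_ltn_trans (size_r t)) // -{1}(add0n a) ltn_add2r lt0n size_poly_eq0.
split; first by move: mQ; rewrite !monicE QE lead_coefDl // lead_coef_Mmonic.
by move: sQ; rewrite QE size_polyDl // sSpi; lia.
Qed.

Lemma Es_le_ip_S t : Es <= ip m z u (S t * pi) (S t * pi).
Proof.
have [mS sS] := S_monic_size t.
rewrite mulrC /Es /Psi !ip_pi (OP_pythagoras Phn_OP mS sS) lerDl ip_self_ge0 // => j _.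
rewrite /restr_weight; case: ifP => // /mu_gt0 mu0.
by rewrite mulr_ge0 ?exprn_ge0 ?nrm_ge0 ?ltW.
Qed.

Lemma S_Q_vanishing :
  vanishing (fun t => ip m z u (S t * pi) (S t * pi) - ip m z u (Q t) (Q t)).
Proof.
have Q_bnd j : (1 <= j <= m)%N -> u j != 0 ->
    exists B, \forall t \near +oo, nrm (Q t).[z j] <= B.
  by move=> _; rewrite /u /restr_weight; case: ifP => [/Q_bounded_block|]; rewrite ?eqxx.
have r_van j : (1 <= j <= m)%N -> u j != 0 -> vanishing (fun t => (- r t).[z j]).
  by move=> _ _; apply: (vanishing_ext (vanishingN (r_vanishing (z j)))) => t; rewrite hornerN.
apply: (vanishing_ext (vanishing_ip_selfD Q_bnd r_van)) => t.
by rewrite /S /r (_ : Q t - Q t %% pi = Q t %/ pi * pi) // {1}(divp_eq (Q t) pi) addrK.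
Qed.

(* mu_j |(Psi - Q)(z_j)|^2 <= |Psi - Q|_v^2 = |Psi|_v^2 - |Q|_v^2
   <= Es + eps - |Q|_u^2 <= eps + (|S pi|_u^2 - |Q|_u^2), using Es <= |S pi|_u^2. *)
Lemma Psi_Q_vanishing_block j : (a < j <= b)%N -> vanishing (fun t => (Psi - Q t).[z j]).
Proof.
move=> jb; have jm : (1 <= j <= m)%N by lia.
apply: (vanishing_sqr (mu_gt0 jb) (vanishingD eps_vanishing S_Q_vanishing)).
apply: filterE => t; set D := Psi - Q t.
apply: le_nrm; first by rewrite mulr_ge0 ?exprn_ge0 ?nrm_ge0 ?ltW ?mu_gt0.
have := ip_self_ge_term z u_ge0 D jm; rewrite /u /restr_weight jb rmorphM rmorphXn /= -normcE.
move/le_trans; apply; apply: le_trans (ip_u_le_v t D) _.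
have -> : ip m z (v t) D D = Es + eps t - ip m z (v t) (Q t) (Q t).
  by rewrite -Q_Psi_pythagoras addrC addKr.
rewrite -subr_ge0.
set Su := ip m z u (S t * pi) _; set Qu := ip m z u (Q t) _; set Qv := ip m z (v t) _ _.
have -> : eps t + (Su - Qu) - (Es + eps t - Qv) = (Su - Es) + (Qv - Qu) by ring.
by rewrite addr_ge0 // subr_ge0 ?Es_le_ip_S ?ip_u_le_v.
Qed.

Theorem OP_block_limit c : vanishing (fun t => (Q t - pi * Phn)`_c).
Proof.
have sD t : (size (Q t - Psi)%R <= b)%N.
  have [mQ sQ _] := Q_OP t.
  exact: leq_trans (size_sub_monic mQ Psi_monic sQ size_Psi) l_le_b.
apply: (vanishing_coef (row_nodes_inj b_le_m) sD) => j; rewrite mxE.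
have [ja|aj] := leqP j.+1 a.
  apply: (vanishing_ext (Q_vanishing_left (p := j.+1) _)) => [|t]; first by rewrite /= ja.
  by rewrite hornerD hornerN hornerM pi_root ?mul0r ?subr0 //= ja.
apply: (vanishing_ext (vanishingN (Psi_Q_vanishing_block (j := j.+1) _))) => [|t].
  by rewrite aj ltn_ord.
by rewrite -hornerN opprB.
Qed.

End BlockLimit.

Lemma K_group_levels (R : realDomainType) (m L : nat) (g : nat -> R) (k : nat -> nat) i :
  (forall p q, (1 <= p <= q)%N -> (q <= m)%N -> g q <= g p) ->
  k 0%N = 0%N -> k L = m -> (forall i, (i < L)%N -> (k i < k i.+1)%N) ->
  (forall i p q, (1 <= i <= L)%N -> (k i.-1 < p <= k i)%N -> (k i.-1 < q <= k i)%N ->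
     g p = g q) ->
  (forall i, (1 <= i < L)%N -> g (k i).+1 < g (k i)) ->
  (1 <= i <= L)%N ->
  [/\ (k i.-1 < k i <= m)%N,
      forall j, (k i.-1 < j <= k i)%N -> g j = g (k i),
      forall j, (1 <= j <= k i.-1)%N -> g (k i) < g j &
      forall j, (k i < j <= m)%N -> g j < g (k i)].
Proof.
move=> g_mono k0 kL k_inc g_const g_jump iL.
have k_mono : {in [pred i | i <= L] &, {homo k : p q / p <= q}}%N.
  apply: homo_leq_in leqnn leq_trans _ _ => [p q _ qL r /andP[_ rq]|p _ pL] /=.
    exact: leq_trans (ltnW rq) qL.
  exact/ltnW/k_inc.
have i_pos : (0 < i)%N by case/andP: iL.
have k_step : (k i.-1 < k i)%N by rewrite -{2}(prednK i_pos) k_inc // prednK //; case/andP: iL.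
have iL' : (i <= L)%N by case/andP: iL.
have kim : (k i <= m)%N by rewrite -kL; apply: k_mono; rewrite ?inE.
have g_blk j : (k i.-1 < j <= k i)%N -> g j = g (k i).
  by move=> jK; apply: (g_const i) => //; rewrite k_step leqnn.
split=> [|//|j /andP[j1 jk]|j /andP[kj jm]]; first by rewrite k_step.
- have i2 : (1 <= i.-1 < L)%N.
    rewrite -ltnS prednK // iL' andbT ltnNge; apply/negP => i1.
    have i0 : i.-1 = 0%N by lia.
    by move: jk; rewrite i0 k0; lia.
  have := g_jump _ i2; rewrite g_blk ?leqnn ?k_step // => /lt_le_trans; apply.
  by apply: g_mono; rewrite ?j1 // (leq_trans (ltnW k_step)).
- have i2 : (1 <= i < L)%N.
    rewrite i_pos ltn_neqAle; case/andP: iL => _ ->; rewrite andbT.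
    by apply: contraTneq kj => ->; rewrite kL -ltnNge.
  by apply: le_lt_trans (g_jump _ i2); apply: g_mono; rewrite ?kj.
Qed.

Lemma uniq_map_nodes (R : rcfType) m (z : nat -> R[i]) (s : seq nat) :
  (forall p q, (1 <= p <= m)%N -> (1 <= q <= m)%N -> z p = z q -> p = q) ->
  (forall j, j \in s -> (1 <= j <= m)%N) -> uniq s -> uniq (map z s).
Proof.
move=> z_inj s_in s_uniq; rewrite map_inj_in_uniq // => p q /s_in + /s_in.
exact: z_inj.
Qed.

Lemma Phi_mu_t_OP (R : realType) m (z : nat -> R[i]) (mu : nat -> R) (G : R[i] -> R)
    (g t : R) n :
  (forall p q, (1 <= p <= m)%N -> (1 <= q <= m)%N -> z p = z q -> p = q) ->
  (forall j, (1 <= j <= m)%N -> 0 < mu j) -> (0 < n <= m)%N ->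
  is_monic_OP m z (fun j => expR (t * (G (z j) - g)) * mu j) n
    (Phi m z (mu_t m z mu G t) n).
Proof.
move=> z_inj mu_gt0 /andP[n0 nm].
pose Z := \sum_(1 <= r < m.+1) expR (t * G (z r)) * mu r.
have Z0 : 0 < Z.
  by apply: sum_nat_gt0 => [|j jm]; [lia | rewrite mulr_gt0 ?expR_gt0 ?mu_gt0].
have mu_t_gt0 j : (1 <= j <= m)%N -> 0 < mu_t m z mu G t j.
  by move=> jm; rewrite /mu_t divr_gt0 ?mulr_gt0 ?expR_gt0 ?mu_gt0.
apply: (@OP_scale _ _ _ _ (mu_t m z mu G t) (expR (t * g) / Z)).
- by rewrite mulf_neq0 ?invr_eq0 ?gt_eqF ?expR_gt0.
- move=> j; rewrite /mu_t -/Z (_ : t * G (z j) = t * g + t * (G (z j) - g)) ?expRD;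
    by ring.
apply/Phi_OP/(@OP_exists _ _ _ _ _ (iota 1 m)) => [j /mu_t_gt0/ltW //|j||].
- by rewrite mem_iota add1n ltnS => jm; split; [|exact: mu_t_gt0].
- by apply: uniq_map_nodes z_inj _ (iota_uniq _ _) => j; rewrite mem_iota add1n ltnS.
- by rewrite size_iota.
Qed.

Lemma prod_Re_sqr_norm (R : rcfType) (z : nat -> R[i]) a y :
  \prod_(1 <= p < a.+1) complex.Re (`|y - z p| ^+ 2) =
  nrm (\prod_(1 <= p < a.+1) ('X - (z p)%:P)).[y] ^+ 2.
Proof.
rewrite horner_prod (big_morph _ (@nrmM _) (nrm1 _)) -prodrXl.
by apply: eq_bigr => p _; rewrite hornerXsubC Re_sqr_norm.
Qed.

Lemma Phi_muK_OP (R : rcfType) m (z : nat -> R[i]) (mu : nat -> R) a b n :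
  (forall p q, (1 <= p <= m)%N -> (1 <= q <= m)%N -> z p = z q -> p = q) ->
  (forall j, (a < j <= b)%N -> 0 < mu j) -> (a < b <= m)%N -> (n <= b - a)%N ->
  is_monic_OP m z
    (restr_weight a b
       (fun j => nrm (\prod_(1 <= p < a.+1) ('X - (z p)%:P)).[z j] ^+ 2 * mu j))
    n (Phi m z (muK z mu a b) n).
Proof.
move=> z_inj mu_gt0 /andP[ab bm] nba; set W := restr_weight a b _.
have W_gt0 j : (a < j <= b)%N -> 0 < W j.
  move=> jb; rewrite /W /restr_weight jb mulr_gt0 ?mu_gt0 // exprn_gt0 // nrm_gt0 //.
  rewrite horner_prod prodf_seq_neq0; apply/allP => p; rewrite mem_index_iota => pa /=.
  have jm : (1 <= j <= m)%N by lia.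
  have pm : (1 <= p <= m)%N by lia.
  by rewrite hornerXsubC subr_eq0; apply/eqP => /(z_inj _ _ jm pm); lia.
have W_ge0 j : 0 <= W j.
  case: (boolP (a < j <= b)%N) => [/W_gt0/ltW //|jb].
  by rewrite /W /restr_weight (negbTE jb).
have C0 : 0 < \sum_(a.+1 <= r < b.+1) W r by apply: sum_nat_gt0 => // r /W_gt0.
have muKE j : muK z mu a b j = (\sum_(a.+1 <= r < b.+1) W r)^-1 * W j.
  rewrite /muK /W /restr_weight mulrC prod_Re_sqr_norm.
  case: ifP => _; last by rewrite mulr0.
  congr (_^-1 * _); apply: eq_big_nat => r rb.
  by rewrite prod_Re_sqr_norm /W /restr_weight ifT.
apply: (@OP_scale _ _ _ _ (muK z mu a b) _ _ _ (invr_neq0 (lt0r_neq0 C0)) muKE).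
apply/Phi_OP/(@OP_exists _ _ _ _ _ (iota a.+1 n)) => [j _|j||].
- by rewrite muKE; apply: mulr_ge0; [rewrite invr_ge0 ltW | exact: W_ge0].
- rewrite mem_iota => jn; have jb : (a < j <= b)%N by lia.
  by split; [lia | rewrite muKE mulr_gt0 ?invr_gt0 ?W_gt0].
- by apply: uniq_map_nodes z_inj _ (iota_uniq _ _) => j; rewrite mem_iota; lia.
- by rewrite size_iota.
Qed.

Theorem theorem3p4 (R : realType) (m : nat) (z : nat -> R[i]) (mu : nat -> R)
    (G : R[i] -> R) (L : nat) (k : nat -> nat) :
  (forall j, (1 <= j <= m)%N -> `|z j| = 1) ->
  (forall p q, (1 <= p <= m)%N -> (1 <= q <= m)%N -> z p = z q -> p = q) ->
  (forall j, (1 <= j <= m)%N -> 0 < mu j) ->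
  \sum_(1 <= j < m.+1) mu j = 1 ->
  (forall p q, (1 <= p <= q)%N -> (q <= m)%N -> G (z q) <= G (z p)) ->
  (* K-groups K_i = {k_{i-1}+1, ..., k_i}, 1 <= i <= L *)
  k 0%N = 0%N -> k L = m ->
  (forall i, (i < L)%N -> (k i < k i.+1)%N) ->
  (forall i p q, (1 <= i <= L)%N -> (k i.-1 < p <= k i)%N ->
     (k i.-1 < q <= k i)%N -> G (z p) = G (z q)) ->
  (forall i, (1 <= i < L)%N -> G (z (k i).+1) < G (z (k i))) ->
  forall (i l : nat), (1 <= i <= L)%N -> (k i.-1 < l <= k i)%N ->
  forall c : nat,
    cvg_pinfty (fun t : R => (Phi m z (mu_t m z mu G t) l)`_c)
      ((\prod_(1 <= p < (k i.-1).+1) ('X - (z p)%:P)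
         * Phi m z (muK z mu (k i.-1) (k i)) (l - k i.-1)%N)`_c).
Proof.
move=> _ z_inj mu_gt0 _ G_mono k0 kL k_inc G_const G_jump i l iL il c.
have [/andP[ab bm] G_blk G_left G_right] :=
  K_group_levels (g := fun j => G (z j)) G_mono k0 kL k_inc G_const G_jump iL.
move: il ab bm G_blk G_left G_right; set a := k i.-1; set b := k i; set g := G (z b).
move=> /andP[al lb] ab bm G_blk G_left G_right.
apply: vanishing_cvg_pinfty.
apply: (vanishing_ext (OP_block_limit (v := fun t j => expR (t * (G (z j) - g)) * mu j)
  z_inj al lb bm _ _ _ _ _ _ _ c)) => [j jb|t j jm|p M pa|t j jb|j jb|t||t].
- by apply: (mu_gt0 j); lia.
- by rewrite mulr_ge0 ?ltW ?expR_gt0 ?mu_gt0.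
- have d0 : 0 < G (z p) - g by rewrite subr_gt0 G_left.
  have mu0 : 0 < mu p by apply: (mu_gt0 p); lia.
  by apply: filterS (near_expR_ge (M / mu p) d0) => t; rewrite ler_pdivrMr.
- by rewrite G_blk // subrr mulr0 expR0 mul1r.
- by apply: vanishing_expR; rewrite subr_lt0 G_right.
- by apply: Phi_mu_t_OP => //; lia.
- by apply: Phi_muK_OP => //; [move=> j jb; apply: (mu_gt0 j); lia | rewrite ab | lia].
- by rewrite coefB.
Qed.
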